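(* Let $G=(V,E)$ be a graph, let $H\subseteq G$ be a clique (complete subgraph), and let $G'=(V\cup\{v'\},E')$ be obtained by adding a new vertex $v'$ adjacent to every vertex of $H$ and to no other vertex of $G$. If $G'$ is generically globally rigid in $\mathbb{R}^d$, then $G$ is generically globally rigid in $\mathbb{R}^d$.
   Context: A framework is a pair $(G,\mathbf{p})$ with $\mathbf{p}:V\to\mathbb{R}^d$. Frameworks $(G,\mathbf{p})$, $(G,\mathbf{q})$ are equivalent if $\|\mathbf{p}(u)-\mathbf{p}(v)\|=\|\mathbf{q}(u)-\mathbf{q}(v)\|$ for every edge $(u,v)$, and congruent if this holds for all $u,v\in V$. $(G,\mathbf{p})$ is globally rigid if every framework equivalent to it is congruent to it. A configuration is generic if its coordinates satisfy no nontrivial polynomial equation with rational coefficients; $G$ is generically globally rigid in $\mathbb{R}^d$ if every generic $d$-dimensional framework of $G$ is globally rigid (global rigidity is known to be a generic property: either all or no generic configurations of a graph are globally rigid). *)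

(* the real numbers are an arbitrary [realType]
   (every realType is isomorphic to the usual reals). *)
From HB Require Import structures.
From mathcomp Require Import all_boot all_order all_algebra.
From mathcomp Require Import reals.
From mathcomp Require Import mpoly.

Set Implicit Arguments.
Unset Strict Implicit.
Unset Printing Implicit Defensive.

Import Order.TTheory GRing.Theory Num.Theory.
Local Open Scope ring_scope.

(* A (simple) graph on a finite vertex type V is an edge relation [e : rel V];
   (u,v) is an edge iff [e u v].  A framework is a map [p : V -> 'rV[R]_d]. *)

Definition sqdist (R : realType) (d : nat) (x y : 'rV[R]_d) : R :=
  \sum_(j < d) (x 0 j - y 0 j) ^+ 2.

Definition simple_graph (V : finType) (e : rel V) : Prop :=
  ssrbool.symmetric e /\ irreflexive e.

Definition equivalent (R : realType) (d : nat) (V : finType) (e : rel V)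
    (p q : V -> 'rV[R]_d) : Prop :=
  forall u v, e u v -> sqdist (p u) (p v) = sqdist (q u) (q v).

Definition congruent (R : realType) (d : nat) (V : finType)
    (p q : V -> 'rV[R]_d) : Prop :=
  forall u v, sqdist (p u) (p v) = sqdist (q u) (q v).

Definition globally_rigid (R : realType) (d : nat) (V : finType) (e : rel V)
    (p : V -> 'rV[R]_d) : Prop :=
  forall q : V -> 'rV[R]_d, equivalent e p q -> congruent p q.

Definition coords (R : realType) (d : nat) (V : finType) (p : V -> 'rV[R]_d)
    (k : 'I_#|{: V * 'I_d}|) : R :=
  let vj := enum_val k in p vj.1 0 vj.2.

Definition generic (R : realType) (d : nat) (V : finType)
    (p : V -> 'rV[R]_d) : Prop :=
  forall P : {mpoly rat[#|{: V * 'I_d}|]},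
    P != 0 -> mmap (@ratr R) (coords p) P != 0.

Definition generically_globally_rigid (R : realType) (d : nat) (V : finType)
    (e : rel V) : Prop :=
  forall p : V -> 'rV[R]_d, generic p -> globally_rigid e p.

Definition is_clique (V : finType) (e : rel V) (H : {set V}) : Prop :=
  forall u v, u \in H -> v \in H -> u != v -> e u v.

(* G' : add a new vertex [None] adjacent exactly to the vertices of H *)
Definition cone_ext (V : finType) (e : rel V) (H : {set V}) : rel (option V) :=
  fun x y =>
    match x, y with
    | Some u, Some v => e u v
    | None, Some v => v \in H
    | Some u, None => u \in H
    | None, None => false
    end.

(** Let [p] be a generic framework of [G] and [q] an equivalent one.  As [H]
    is a clique, [q] agrees with [p] on all distances within [H], so a
    composition of reflections [f] maps [p] to [q] on [H].  Add a new point
    [x] to [p] keeping it generic, and [f x] to [q]: the two frameworks of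
    [G'] are equivalent, since [v'] is only joined to [H] and [f] is an
    isometry, hence congruent by global rigidity of [G'], and so [p] and [q]
    are congruent.  The point [x] exists coordinate by coordinate: a new
    coordinate has to avoid the roots of countably many nonzero univariate
    polynomials, and a nested interval argument shows that the reals are not
    covered by them. *)

From HB Require Import structures.
From mathcomp Require Import all_boot all_order all_algebra.
From mathcomp Require Import reals.
From mathcomp Require Import boolp classical_sets mpoly.
From mathcomp Require Import ring zify.

Set Implicit Arguments.
Unset Strict Implicit.
Unset Printing Implicit Defensive.

Import Order.TTheory GRing.Theory Num.Theory.
Local Open Scope ring_scope.

Section Isometries.
Variables (R : realType) (d : nat).
Local Notation D := (@sqdist R d).
Implicit Types x y a b : 'rV[R]_d.

Lemma sqdistC x y : D x y = D y x.
Proof. by apply: eq_bigr => j _; ring. Qed.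

Lemma sqdistxx x : D x x = 0.
Proof. by rewrite /sqdist big1 // => j _; rewrite subrr expr0n. Qed.

Lemma sqdist_eq0 x y : (D x y == 0) = (x == y).
Proof.
apply/idP/eqP => [|->]; last by rewrite sqdistxx.
rewrite psumr_eq0 => [/allP xy|j _]; last exact: sqr_ge0.
apply/rowP => j; apply/eqP; rewrite -subr_eq0 -sqrf_eq0.
exact: xy (mem_index_enum j).
Qed.

Definition bisector_reflection a b x : 'rV[R]_d :=
  x - ((D x a - D x b) / D a b) *: (b - a).

Lemma sqdist_bisector_reflection a b x y : a != b ->
  D (bisector_reflection a b x) (bisector_reflection a b y) = D x y.
Proof.
rewrite -sqdist_eq0 => Dab_neq0; rewrite /bisector_reflection.
set c := (D x a - D x b) / D a b; set c' := (D y a - D y b) / D a b.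
pose s := \sum_(j < d) (x 0 j - y 0 j) * (b 0 j - a 0 j).
have cc'_Dab : (c - c') * D a b = 2 * s.
  rewrite mulrBl !divfK // /sqdist /s mulr_sumr -!sumrB.
  by apply: eq_bigr => j _; ring.
have -> : D (x - c *: (b - a)) (y - c' *: (b - a)) =
          D x y - 2 * (c - c') * s + (c - c') ^+ 2 * D a b.
  rewrite [D a b]sqdistC /sqdist /s mulr_sumr mulr_sumr -sumrB -big_split /=.
  by apply: eq_bigr => j _; rewrite !mxE; ring.
by rewrite expr2 -[_ * _ * D a b]mulrA cc'_Dab; ring.
Qed.

Lemma bisector_reflection_swap a b : a != b -> bisector_reflection a b a = b.
Proof.
rewrite -sqdist_eq0 => Dab_neq0; rewrite /bisector_reflection sqdistxx sub0r.
by rewrite mulNr divff // scaleN1r opprK addrC subrK.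
Qed.

Lemma bisector_reflection_id a b x :
  D x a = D x b -> bisector_reflection a b x = x.
Proof.
by move=> eqD; rewrite /bisector_reflection eqD subrr mul0r scale0r subr0.
Qed.

(* Each new point is moved into place by a reflection fixing the points
   already matched, which are equidistant from its two positions. *)
Lemma extend_partial_isometry (T : eqType) (p q : T -> 'rV[R]_d) (s : seq T) :
  {in s &, forall u v, D (p u) (p v) = D (q u) (q v)} ->
  exists2 f : 'rV[R]_d -> 'rV[R]_d,
    forall x y, D (f x) (f y) = D x y & {in s, forall u, f (p u) = q u}.
Proof.
elim: s => [|u s IH] pq_s; first by exists id.
have [f f_iso fpq] : exists2 f : 'rV[R]_d -> 'rV[R]_d,
    forall x y, D (f x) (f y) = D x y & {in s, forall u, f (p u) = q u}.
  by apply: IH => v w vs ws; apply: pq_s; rewrite inE ?vs ?ws orbT.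
have [fpq_u|fpq_u] := eqVneq (f (p u)) (q u).
  by exists f => // v; rewrite inE => /predU1P [->|/fpq].
exists (bisector_reflection (f (p u)) (q u) \o f) => [x y|v] /=.
  by rewrite sqdist_bisector_reflection.
rewrite inE => /predU1P [->|vs]; first exact: bisector_reflection_swap.
rewrite bisector_reflection_id (fpq v vs) // -[in LHS](fpq v vs) f_iso.
by rewrite pq_s ?inE ?eqxx ?vs ?orbT.
Qed.

End Isometries.

Section CommonNonRoot.
Variable R : realType.

Lemma nested_intervals_meet (I : nat -> R * R) :
  (forall k, (I k).1 <= (I k).2) ->
  (forall k, (I k).1 <= (I k.+1).1 /\ (I k.+1).2 <= (I k).2) ->
  exists t, forall k, (I k).1 <= t <= (I k).2.
Proof.
move=> I_le I_nested.
have left_mono : {homo (fun k => (I k).1) : m n / (m <= n)%N >-> m <= n}.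
  by apply: homo_leq => [//||k]; [exact: le_trans | exact: (I_nested k).1].
have right_mono : {homo (fun k => (I k).2) : m n / (m <= n)%N >-> n <= m}.
  apply: homo_leq => [//|y x z xy yz|k]; first exact: le_trans yz xy.
  exact: (I_nested k).2.
have left_le_right m k : (I m).1 <= (I k).2.
  apply: le_trans (left_mono _ _ (leq_maxl m k)) _.
  exact: le_trans (I_le _) (right_mono _ _ (leq_maxr m k)).
pose lefts := range (fun k => (I k).1).
have lefts_sup : has_sup lefts.
  by split; [exists (I 0%N).1, 0%N | exists (I 0%N).2 => _ [m _ <-]].
exists (sup lefts) => k; apply/andP; split.
- by apply: sup_upper_bound => //; exists k.
- by apply: ge_sup; [case: lefts_sup | move=> _ [m _ <-]].
Qed.

Lemma poly_nonroot_subinterval (u : {poly R}) (l r : R) : u != 0 -> l < r ->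
  exists J : R * R, [/\ l <= J.1, J.1 < J.2, J.2 <= r &
                        forall x, J.1 <= x <= J.2 -> ~~ root u x].
Proof.
move=> u_neq0 lr; set N := size u.
have N_gt0 : (0 < N)%N by rewrite size_poly_gt0.
pose h := (r - l) / (2 * N)%:R.
have h_gt0 : 0 < h by rewrite divr_gt0 ?subr_gt0 // ltr0n muln_gt0 N_gt0.
have hN : (2 * N)%:R * h = r - l.
  by rewrite mulrC divfK // pnatr_eq0 -lt0n muln_gt0 N_gt0.
(* The [N] pairwise disjoint intervals [[l + 2ih, l + (2i+1)h]] cannot all
   contain a root of [u]. *)
pose J (i : 'I_N) := (l + (2 * i)%:R * h, l + (2 * i).+1%:R * h).
apply: contrapT => no_J.
have J_root i : exists x, (J i).1 <= x <= (J i).2 /\ root u x.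
  apply: contrapT => /forallNP J_free; apply: no_J; exists (J i); split => /=.
  - by rewrite lerDl mulr_ge0 // ltW.
  - by rewrite ltrD2l ltr_pM2r // ltr_nat.
  - by rewrite -lerBrDl -hN ler_pM2r // ler_nat; have := ltn_ord i; lia.
  - by move=> x x_in; apply/negP => ux; apply: (J_free x).
have [x x_root] := fin_all_exists J_root.
have x_mono (i j : 'I_N) : (i < j)%N -> x i < x j.
  move=> ij; have [/andP [_ xi_le] _] := x_root i.
  have [/andP [xj_ge _] _] := x_root j.
  apply: le_lt_trans xi_le (lt_le_trans _ xj_ge).
  by rewrite ltrD2l ltr_pM2r // ltr_nat; lia.
have x_inj : injective x.
  move=> i j xij; apply: contrapT => /eqP; rewrite neq_ltn => /orP [] /x_mono;
  by rewrite xij ltxx.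
suff : (size [seq x i | i <- enum 'I_N] < N)%N.
  by rewrite size_map size_enum_ord ltnn.
apply: max_poly_roots => //; last by rewrite map_inj_uniq ?enum_uniq.
by apply/allP => _ /mapP [i _ ->]; case: (x_root i).
Qed.

Lemma exists_common_nonroot (T : countType) (u : T -> {poly R}) :
  exists t, forall k, u k != 0 -> ~~ root (u k) t.
Proof.
pose v n := if unpickle n is Some k then (if u k != 0 then u k else 1) else 1.
have v_neq0 n : v n != 0.
  rewrite /v; case: unpickle => [k|]; last exact: oner_neq0.
  by case: ifP => // _; exact: oner_neq0.
pose shrinks n (J J' : R * R) := J.1 < J.2 ->
  [/\ J.1 <= J'.1, J'.1 < J'.2, J'.2 <= J.2 &
      forall x, J'.1 <= x <= J'.2 -> ~~ root (v n) x].
have [step stepP] : {step : nat * (R * R) -> R * R &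
                     forall nJ, shrinks nJ.1 nJ.2 (step nJ)}.
  apply: (@choice _ _ (fun nJ J' => shrinks nJ.1 nJ.2 J')) => -[n J].
  have [lJ|Jl] := ltP J.1 J.2.
    by have [J' ?] := poly_nonroot_subinterval (v_neq0 n) lJ; exists J'.
  by exists J => /(lt_le_trans)/(_ Jl); rewrite ltxx.
pose I := fix I n := if n is n'.+1 then step (n', I n') else (0 : R, 1 : R).
have I_lt n : (I n).1 < (I n).2.
  by elim: n => [|n IH] /=; [exact: ltr01 | case: (stepP (n, I n))].
have [t t_in] : exists t, forall n, (I n).1 <= t <= (I n).2.
  apply: nested_intervals_meet => n; first exact/ltW.
  by case: (stepP (n, I n) (I_lt n)).
exists t => k uk_neq0; have := stepP (pickle k, I (pickle k)) (I_lt _).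
by case=> _ _ _; rewrite /v pickleK uk_neq0; apply; exact: t_in (pickle k).+1.
Qed.

End CommonNonRoot.

Lemma mpoly_rmorph_eq n (S : comNzRingType)
    (F G : {rmorphism {mpoly rat[n]} -> S}) :
  (forall c, F c%:MP = G c%:MP) -> (forall i, F 'X_i = G 'X_i) -> F =1 G.
Proof.
move=> FGC FGX p; rewrite (mpolyE p) !rmorph_sum; apply: eq_bigr => m _.
rewrite -mul_mpolyC !rmorphM FGC mpolyXE_id !rmorph_prod; congr (_ * _).
by apply: eq_bigr => i _; rewrite !rmorphXn FGX.
Qed.

Lemma mmapXU n (S : comNzRingType) (f : {rmorphism rat -> S}) (h : 'I_n -> S) i :
  mmap f h 'X_i = h i.
Proof. by rewrite mmapX mmap1U. Qed.

Lemma muniXU n (i : 'I_n.+1) : muni ('X_i : {mpoly rat[n.+1]}) =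
  if unlift ord_max i is Some j then ('X_j)%:P else 'X.
Proof.
rewrite /muni mmapXU /=; case: splitP => [j /= ij|j /= ij].
  have -> : i = lift ord_max j.
    by apply: val_inj; rewrite /= /bump leqNgt ij ltn_ord.
  by rewrite liftK.
have -> : i = ord_max by apply: val_inj; rewrite /= ij ord1 addn0.
by rewrite unlift_none.
Qed.

Local Notation widen := (widen_ord (leqnSn _)).

Lemma mnm_eq_split n (m m' : 'X_{1..n.+1}) :
  (m == m') =
  ([multinom m (widen i) | i < n] == [multinom m' (widen i) | i < n])
  && (m ord_max == m' ord_max).
Proof.
apply/eqP/andP => [-> //|[/eqP mm' /eqP mm'_max]].
apply/mnmP => i; case: (unliftP ord_max i) => [k ->|-> //].
have -> : lift ord_max k = widen k.
  by apply: val_inj; rewrite /= /bump leqNgt ltn_ord.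
by have := congr1 (fun mm : 'X_{1..n} => mm k) mm'; rewrite !mnmE.
Qed.

Lemma mcoeff_muni n (P : {mpoly rat[n.+1]}) (m : 'X_{1..n.+1}) :
  ((muni P)`_(m ord_max))@_[multinom m (widen i) | i < n] = P@_m.
Proof.
rewrite [in RHS](mpolyE P) muniE coef_sum !raddf_sum /=.
apply: eq_bigr => m' _.
rewrite coefZ coefXn mulr_natr mcoeffMn !mcoeffZ !mcoeffX mnm_eq_split.
rewrite [m ord_max == _]eq_sym.
by case: (_ == _); case: (_ == _); rewrite /= ?mulr1 ?mulr0 ?mulr0n ?mulr1n.
Qed.

Section AlgebraicIndependence.
Variable R : realType.

Definition alg_indep_ord n (a : 'I_n -> R) :=
  forall P : {mpoly rat[n]}, P != 0 -> mmap (@ratr R) a P != 0.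

(* [generic p] is convertible to [alg_indep] of the coordinate map
   [fun vj : V * 'I_d => p vj.1 0 vj.2]. *)
Definition alg_indep (I : finType) (a : I -> R) :=
  alg_indep_ord (fun k : 'I_#|{: I}| => a (enum_val k)).

Lemma alg_indep_ord_inj n m (a : 'I_n -> R) (b : 'I_m -> R) (s : 'I_m -> 'I_n) :
  injective s -> b =1 a \o s -> alg_indep_ord a -> alg_indep_ord b.
Proof.
move=> s_inj bas a_indep P P_neq0.
pose sub := [tuple ('X_(s i) : {mpoly rat[n]}) | i < m].
pose unsub := [tuple (if [pick i | s i == j] is Some i then 'X_i else 0
                      : {mpoly rat[m]}) | j < n].
have eval_sub : mmap (@ratr R) a (comp_mpoly sub P) = mmap (@ratr R) b P.
  apply: (mpoly_rmorph_eq (F := mmap (@ratr R) a \o comp_mpoly sub)) => [c|i] /=.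
    by rewrite comp_mpolyC !mmapC.
  by rewrite comp_mpolyXU -tnth_nth tnth_mktuple !mmapXU bas.
have unsubK : comp_mpoly unsub (comp_mpoly sub P) = P.
  apply: (mpoly_rmorph_eq (F := comp_mpoly unsub \o comp_mpoly sub)
                          (G := idfun)) => [c|i] /=.
    by rewrite !comp_mpolyC.
  rewrite comp_mpolyXU -tnth_nth tnth_mktuple.
  rewrite comp_mpolyXU -tnth_nth tnth_mktuple.
  by case: pickP => [j /eqP /s_inj -> //|/(_ i)]; rewrite eqxx.
rewrite -eval_sub; apply: a_indep; apply: contra_neq P_neq0 => sub0.
by rewrite -unsubK sub0 rmorph0.
Qed.

Lemma alg_indep_inj (I J : finType) (a : I -> R) (b : J -> R) (f : J -> I) :
  injective f -> b =1 a \o f -> alg_indep a -> alg_indep b.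
Proof.
move=> f_inj baf; apply: (alg_indep_ord_inj (s := enum_rank \o f \o enum_val)).
- by move=> k k' /enum_rank_inj /f_inj /enum_val_inj.
- by move=> k /=; rewrite enum_rankK baf.
Qed.

Definition extend_ord n (a : 'I_n -> R) (t : R) (i : 'I_n.+1) : R :=
  oapp a t (unlift ord_max i).

Lemma mmap_muni n (a : 'I_n -> R) t (P : {mpoly rat[n.+1]}) :
  mmap (@ratr R) (extend_ord a t) P =
  (map_poly (mmap (@ratr R) a) (muni P)).[t].
Proof.
apply: (mpoly_rmorph_eq (F := mmap (@ratr R) (extend_ord a t))
   (G := horner_eval t \o map_poly (mmap (@ratr R) a) \o (@muni n rat)))
   => [c|i] /=.
  by rewrite muniC map_polyC /= horner_evalE hornerC !mmapC.
rewrite muniXU mmapXU /extend_ord; case: unlift => [j|] /=.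
  by rewrite map_polyC /= horner_evalE hornerC /= mmapXU.
by rewrite map_polyX horner_evalE hornerX.
Qed.

(* The coefficients of [muni P] are nonzero polynomials in the first [n]
   variables, which [a] cannot annihilate. *)
Lemma map_muni_neq0 n (a : 'I_n -> R) (P : {mpoly rat[n.+1]}) :
  alg_indep_ord a -> P != 0 -> map_poly (mmap (@ratr R) a) (muni P) != 0.
Proof.
move=> a_indep; rewrite -msupp_eq0; case P_supp: (msupp P) => [//|m s] _.
have Pm_neq0 : P@_m != 0 by rewrite mcoeff_eq0 negbK P_supp mem_head.
apply/eqP => /(congr1 (fun q : {poly R} => q`_(m ord_max))).
rewrite coef_map coef0 => /eqP; apply/negP/a_indep.
by apply: contra_neq Pm_neq0; rewrite -mcoeff_muni => ->; rewrite mcoeff0.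
Qed.

(* [{mpoly rat[n.+1]}] is not a countType, so the polynomials are reached
   through the countable type of their coefficient lists. *)
Lemma alg_indep_ord_extend n (a : 'I_n -> R) :
  alg_indep_ord a -> exists t, alg_indep_ord (extend_ord a t).
Proof.
move=> a_indep.
pose mpoly_of (s : seq ('X_{1..n.+1} * rat)) : {mpoly rat[n.+1]} :=
  \sum_(x <- s) x.2 *: 'X_[x.1].
have [t t_nonroot] := exists_common_nonroot
  (fun s => map_poly (mmap (@ratr R) a) (muni (mpoly_of s))).
exists t => P P_neq0; pose s := [seq (m, P@_m) | m <- msupp P].
have sP : mpoly_of s = P by rewrite /mpoly_of big_map /= -mpolyE.
have := t_nonroot s; rewrite sP map_muni_neq0 // mmap_muni; exact.
Qed.

Lemma alg_indep_option (I : finType) (a : I -> R) :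
  alg_indep a -> exists t, alg_indep (oapp a t).
Proof.
move=> a_indep; have [t t_indep] := alg_indep_ord_extend a_indep; exists t.
pose s (o : option I) := oapp (lift ord_max \o enum_rank) ord_max o.
have sK : cancel s (omap enum_val \o unlift ord_max).
  by case=> [i|] /=; rewrite ?liftK /= ?enum_rankK ?unlift_none.
apply: (alg_indep_ord_inj (s := s \o enum_val) _ _ t_indep).
  by move=> k k' /(can_inj sK) /enum_val_inj.
move=> k; rewrite /extend_ord /=; case: (enum_val k) => [i|] /=.
  by rewrite liftK /= enum_rankK.
by rewrite unlift_none.
Qed.

Definition sum_fun (I J : Type) (a : I -> R) (b : J -> R) (x : I + J) : R :=
  match x with inl i => a i | inr j => b j end.

Lemma alg_indep_extend (I : finType) (a : I -> R) k :
  alg_indep a -> exists b : 'I_k -> R, alg_indep (sum_fun a b).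
Proof.
move=> a_indep; elim: k => [|k [b b_indep]].
  pose f (x : I + 'I_0) := match x with
    | inl i => i | inr j => False_rect I (notF (ltn_ord j)) end.
  exists (fun _ => 0); apply: (alg_indep_inj (f := f)) a_indep.
    by move=> [i|[]//] [i'|[]//] /= ->.
  by case=> // -[].
have [t t_indep] := alg_indep_option b_indep; exists (extend_ord b t).
pose f (x : I + 'I_k.+1) := match x with
  | inl i => Some (inl i) | inr j => omap inr (unlift ord_max j) end.
pose g (o : option (I + 'I_k)) := match o with
  | Some (inl i) => inl i | Some (inr j) => inr (lift ord_max j)
  | None => inr ord_max end.
have fK : cancel f g by case=> [i|j] //=; case: unliftP => [j' ->|->].
apply: (alg_indep_inj (can_inj fK)) t_indep => -[i|j] //=.
by rewrite /extend_ord; case: unlift.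
Qed.

End AlgebraicIndependence.

Lemma generic_extend (R : realType) d (V : finType) (p : V -> 'rV[R]_d) :
  generic p -> exists x : 'rV[R]_d, generic (oapp p x).
Proof.
move=> p_gen; have [b b_indep] := alg_indep_extend d
  (p_gen : alg_indep (fun vj : V * 'I_d => p vj.1 0 vj.2)).
exists (\row_j b j).
pose f (vj : option V * 'I_d) :=
  if vj.1 is Some v then inl (v, vj.2) else inr vj.2.
apply: (alg_indep_inj (b := fun vj => oapp p (\row_j b j) vj.1 0 vj.2)
                      (f := f) _ _ b_indep).
  by move=> [[v|] j] [[v'|] j'] //= [] => [-> ->|->].
by move=> [[v|] j] /=; rewrite ?mxE.
Qed.

Theorem proposition8 (R : realType) (d : nat) (V : finType) (e : rel V)
    (H : {set V}) :
  simple_graph e -> is_clique e H ->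
  generically_globally_rigid R d (cone_ext e H) ->
  generically_globally_rigid R d e.
Proof.
move=> _ H_clique cone_rigid p p_gen q pq_equiv.
have [x px_gen] := generic_extend p_gen.
have [f f_iso fpq] : exists2 f : 'rV[R]_d -> 'rV[R]_d,
    forall x y, sqdist (f x) (f y) = sqdist x y &
    {in enum H, forall u, f (p u) = q u}.
  apply: extend_partial_isometry => u v; rewrite !mem_enum => uH vH.
  have [->|uv] := eqVneq u v; first by rewrite !sqdistxx.
  exact: pq_equiv (H_clique u v uH vH uv).
have cone_equiv : equivalent (cone_ext e H) (oapp p x) (oapp q (f x)).
  case=> [u|] [v|] //= uv; first exact: pq_equiv.
  - by rewrite -(fpq u) ?mem_enum // f_iso.
  - by rewrite -(fpq v) ?mem_enum // f_iso.
by move=> u v; apply: (cone_rigid _ px_gen _ cone_equiv (Some u) (Some v)).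
Qed.
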